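(* Let $G$ be a connected graph. Then: (i) $\mu_t(G)\ge|\mathcal{S}(G)|$; (ii) if $\mu_t(G)=|\mathcal{S}(G)|$, then $\mu_t(G)=n(G)-|\mathcal{P}(G)|$; (iii) if $\mu_t(G)=n(G)-|\mathcal{P}(G)|$, then $\mu_t(G)=|\mathcal{C}(G)|$.
   Context: All graphs are finite, simple and undirected; $n(G)$ denotes the order of $G$ and $N_G[v]$ the closed neighborhood of $v$. Let $G$ be a connected graph and $X\subseteq V(G)$. Two vertices $x,y\in V(G)$ are $X$-visible if there exists a shortest $x,y$-path in $G$ none of whose internal vertices (i.e., vertices other than $x$ and $y$) belongs to $X$. The set $X$ is a total mutual-visibility set of $G$ if every two vertices of $G$ are $X$-visible (the empty set is allowed). The total mutual-visibility number $\mu_t(G)$ is the maximum cardinality of a total mutual-visibility set of $G$; a $\mu_t(G)$-set is a total mutual-visibility set of cardinality $\mu_t(G)$. $\mathcal{C}(G)$ is the set of vertices belonging to every $\mu_t(G)$-set. A vertex is simplicial if its neighbors induce a complete graph; $\mathcal{S}(G)$ is the set of simplicial vertices of $G$. $\mathcal{P}(G)$ is the set of vertices $v$ for which there exist two distinct vertices $u,w\in V(G)$ with $N_G[u]\cap N_G[w]=\{v\}$ (equivalently, $v$ is the middle vertex of a convex, i.e. geodesically closed, induced path $P_3$). *)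

From mathcomp Require Import all_boot.
From mathcomp Require Import boolp.
Set Implicit Arguments. Unset Strict Implicit. Unset Printing Implicit Defensive.

Definition simple_graph (T : finType) (e : rel T) : Prop :=
  symmetric e /\ irreflexive e.

Definition connected_graph (T : finType) (e : rel T) : Prop :=
  forall x y : T, connect e x y.

(* A walk from x to y: the sequence of vertices after x, ending at y; its
   length is size p. *)
Definition walk (T : finType) (e : rel T) (x y : T) (p : seq T) : Prop :=
  path e x p /\ last x p = y.

Definition shortest_path (T : finType) (e : rel T) (x y : T) (p : seq T) : Prop :=
  walk e x y p /\ forall q, walk e x y q -> size p <= size q.

Definition internal (T : finType) (p : seq T) : seq T := take (size p).-1 p.

Definition visible (T : finType) (e : rel T) (X : {set T}) (x y : T) : Prop :=
  exists p, shortest_path e x y p /\ forall v, v \in internal p -> v \notin X.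

Definition total_mv_set (T : finType) (e : rel T) (X : {set T}) : Prop :=
  forall x y : T, visible e X x y.

Definition mu_t_set (T : finType) (e : rel T) (X : {set T}) : Prop :=
  total_mv_set e X /\ forall Y : {set T}, total_mv_set e Y -> #|Y| <= #|X|.

Definition is_mu_t (T : finType) (e : rel T) (m : nat) : Prop :=
  (exists X : {set T}, total_mv_set e X /\ #|X| = m) /\
  forall X : {set T}, total_mv_set e X -> #|X| <= m.

Definition closed_nbhd (T : finType) (e : rel T) (v : T) : {set T} :=
  [set u | (u == v) || e v u].

Definition simplicial (T : finType) (e : rel T) (v : T) : bool :=
  [forall u, forall w, (e v u && e v w && (u != w)) ==> e u w].

Definition S_set (T : finType) (e : rel T) : {set T} := [set v | simplicial e v].

Definition P_set (T : finType) (e : rel T) : {set T} :=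
  [set v | [exists u, exists w,
     (u != w) && (closed_nbhd e u :&: closed_nbhd e w == [set v])]].

Definition C_set (T : finType) (e : rel T) : {set T} :=
  [set v | `[< forall X : {set T}, mu_t_set e X -> v \in X >]].

From mathcomp Require Import all_boot.
From mathcomp Require Import boolp.
From mathcomp Require Import zify.

(* Everything rests on two facts about a shortest path  ... u c w ...:
   its neighbours u, w of an internal vertex c are distinct and non-adjacent.
   Consequences, for a connected graph:
   - a simplicial vertex is never internal to a shortest path, so S(G) is a
     total mutual-visibility set: mu_t >= |S| (part (i));
   - a vertex v of P(G) is the unique common neighbour of two non-adjacent
     vertices u, w, so the only shortest u,w-path passes through v; hence
     every total mutual-visibility set lies in V \ P and mu_t <= n - |P|;
   - a vertex x outside P can be bypassed on any shortest path (the ends of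
     the P3 through x have another common neighbour), so S + x is a total
     mutual-visibility set for x outside P.
   If mu_t = |S|, the last fact forces S = V \ P (part (ii)); if
   mu_t = n - |P|, every mu_t-set is V \ P, which is then C(G) (part (iii)). *)

Section ShortestPaths.
Variables (T : finType) (e : rel T).

Lemma shortest_path_exists a b : connect e a b -> exists p, shortest_path e a b p.
Proof.
move/connectP=> [p0 Hp0 Hl0].
pose has_walk n := `[< exists p, walk e a b p /\ size p = n >].
have ex_walk : exists n, has_walk n by exists (size p0); apply/asboolP; exists p0.
case: (ex_minnP ex_walk) => n /asboolP [p [Hp <-]] Hmin.
exists p; split => // q Hq; apply: Hmin; apply/asboolP; by exists q.
Qed.

(* The two neighbours of an internal vertex on a shortest path are distinct
   and non-adjacent: otherwise the path could be shortened. *)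
Lemma shortest_path_no_shortcut a b p1 c w p3 :
  shortest_path e a b (p1 ++ c :: w :: p3) ->
  last a p1 != w /\ ~~ e (last a p1) w.
Proof.
move=> [[Hp Hl] Hmin].
move: Hp; rewrite cat_path /= => /andP [Hp1 /and3P [_ _ Hp3]].
move: Hl; rewrite last_cat /= => Hl.
split; apply/negP.
- move=> /eqP Hu.
  have W : walk e a b (p1 ++ p3) by split; rewrite ?cat_path ?last_cat Hu ?Hp1.
  by have := Hmin _ W; rewrite !size_cat /=; lia.
- move=> Huw.
  have W : walk e a b (p1 ++ w :: p3) by split; rewrite ?cat_path ?last_cat //= Hp1 Huw.
  by have := Hmin _ W; rewrite !size_cat /=; lia.
Qed.

End ShortestPaths.

Arguments shortest_path_exists {T e a b}.
Arguments shortest_path_no_shortcut {T e a b p1 c w p3}.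

Section InternalVertices.
Variable T : finType.

Lemma internal_cons (z : T) (s : seq T) :
  internal (z :: s) = if s is [::] then [::] else z :: internal s.
Proof. by case: s. Qed.

Lemma internal_split (v : T) (p : seq T) :
  v \in internal p -> exists p1 w p3, p = p1 ++ v :: w :: p3.
Proof.
elim: p => [|y r IH] //; rewrite internal_cons.
case: r IH => [|z r] // IH; rewrite inE => /orP [/eqP ->|Hv].
- by exists [::], z, r.
- by have [p1 [w [p3 ->]]] := IH Hv; exists (y :: p1), w, p3.
Qed.

Lemma internal_cat (p1 : seq T) (c w : T) (p3 : seq T) :
  internal (p1 ++ c :: w :: p3) = p1 ++ c :: internal (w :: p3).
Proof.
elim: p1 => [|z p1 IH] /=; first by rewrite internal_cons.
by rewrite internal_cons; case: p1 IH => [|t p1] IH /=; rewrite IH.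
Qed.

End InternalVertices.

Arguments internal_split {T v p}.

Section Visibility.
Variables (T : finType) (e : rel T).
Hypothesis sym : symmetric e.

Lemma common_closed_nbhd u w z : u != w -> ~~ e u w ->
  (z \in closed_nbhd e u :&: closed_nbhd e w) = e u z && e z w.
Proof.
move=> Huw Nuw; rewrite !inE [e w z]sym.
have [-> | _] := eqVneq z u; first by rewrite (negbTE Huw) (negbTE Nuw) andbF.
have [-> | _] := eqVneq z w; last by [].
by rewrite (negbTE Nuw).
Qed.

Lemma internal_not_simplicial {a b p v} :
  shortest_path e a b p -> v \in internal p -> ~~ simplicial e v.
Proof.
move=> Hs /internal_split [p1 [w [p3 Ep]]]; subst p.
have [Hne Nadj] := shortest_path_no_shortcut Hs.
move: Hs => [[Hp _] _]; move: Hp; rewrite cat_path /= => /andP [_ /and3P [Huv Hvw _]].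
apply/negP => /forallP /(_ (last a p1)) /forallP /(_ w).
by rewrite sym Huv Hvw Hne /= (negbTE Nadj).
Qed.

Hypothesis conn : connected_graph e.

Lemma S_set_total : total_mv_set e (S_set e).
Proof.
move=> a b; have [p Hp] := shortest_path_exists (conn a b).
exists p; split => // v Hv; rewrite inE.
exact: internal_not_simplicial Hp Hv.
Qed.

Lemma P_set_convex_P3 v : v \in P_set e ->
  exists u w, [/\ u != w, ~~ e u w, e u v, e v w &
                  forall z, e u z -> e z w -> z = v].
Proof.
rewrite inE => /existsP [u /existsP [w /andP [Huw /eqP HN]]].
have Nuw : ~~ e u w.
  apply/negP => Euw; move/negP: Huw; apply.
  have /set1P Eu : u \in [set v] by rewrite -HN !inE eqxx sym Euw orbT.
  have /set1P Ew : w \in [set v] by rewrite -HN !inE eqxx Euw orbT.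
  by rewrite Eu Ew.
have common z : e u z && e z w = (z \in [set v]).
  by rewrite -HN common_closed_nbhd.
have /andP [Euv Evw] : e u v && e v w by rewrite common set11.
exists u, w; split => // z Euz Ezw.
by apply/set1P; rewrite -common Euz Ezw.
Qed.

(* No vertex of P belongs to a total mutual-visibility set: it is internal to
   the only shortest path between the ends of its convex P3. *)
Lemma P_set_not_in_total X v : total_mv_set e X -> v \in P_set e -> v \notin X.
Proof.
move=> HX /P_set_convex_P3 [u [w [Huw Nuw Euv Evw Huniq]]].
have [p [[[Hp Hl] Hmin] Hint]] := HX u w.
have := Hmin [:: v; w]; rewrite /walk /= Euv Evw => /(_ (conj erefl erefl)).
clear Hmin; case: p Hp Hl Hint => [|c [|c' [|? ?]]] //=.
- by move=> _ Ewu; rewrite Ewu eqxx in Huw.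
- by rewrite andbT => Euc Ec; subst c; rewrite Euc in Nuw.
- rewrite andbT => /andP [Euc Ecc'] Hc' Hint _; subst c'.
  by rewrite -(Huniq c Euc Ecc'); apply: Hint; rewrite /internal /= inE.
Qed.

Lemma total_subset_nonP X : total_mv_set e X -> X \subset ~: P_set e.
Proof.
move=> HX; apply/subsetP => v Hv; rewrite inE.
by apply: contraL Hv; apply: P_set_not_in_total.
Qed.

Lemma reroute_nonP {a b p1 x w p3} : x \notin P_set e ->
  shortest_path e a b (p1 ++ x :: w :: p3) ->
  exists2 x', x' != x & shortest_path e a b (p1 ++ x' :: w :: p3).
Proof.
move=> HxP Hs; have [Hne Nadj] := shortest_path_no_shortcut Hs.
move: Hs => [[Hp Hl] Hmin].
move: Hp; rewrite cat_path /= => /andP [Hp1 /and3P [Hux Hxw Hp3]].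
set u := last a p1 in Hne Nadj Hux *.
have common z : (z \in closed_nbhd e u :&: closed_nbhd e w) = e u z && e z w.
  exact: common_closed_nbhd.
have [x' /andP [Eux' Ex'w] Hx'x] : exists2 x', e u x' && e x' w & x' != x.
  apply/exists_inP; apply: contraR HxP => Hno; rewrite inE.
  apply/existsP; exists u; apply/existsP; exists w; rewrite Hne /=.
  apply/eqP/setP => z; rewrite common inE.
  apply/idP/eqP => [Hz|->]; last by rewrite Hux Hxw.
  by apply/eqP; apply: contraNT Hno => Hzx; apply/exists_inP; exists z.
exists x' => //; split; [split|].
- by rewrite cat_path Hp1 /= Eux' Ex'w Hp3.
- by move: Hl; rewrite !last_cat.
- by move=> r Hr; have := Hmin r Hr; rewrite !size_cat.
Qed.

(* Iterating the rerouting, a vertex outside P can be avoided as an internal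
   vertex of some shortest path between any two vertices. *)
Lemma shortest_path_avoiding {x} a b : x \notin P_set e ->
  exists q, shortest_path e a b q /\ x \notin internal q.
Proof.
move=> HxP; have [p Hp] := shortest_path_exists (conn a b).
move: (leqnn (count_mem x (internal p))); move: {2}(count_mem x _) => n.
elim: n p Hp => [|n IH] p Hp Hn.
- by exists p; split => //; rewrite -has_pred1 has_count -leqNgt.
- case Hxi: (x \in internal p); last by exists p; rewrite Hxi.
  have [p1 [w [p3 Ep]]] := internal_split Hxi; subst p.
  have [x' Hx'x Hs'] := reroute_nonP HxP Hp.
  apply: (IH _ Hs'); move: Hn.
  by rewrite !internal_cat !count_cat /= eqxx (negbTE Hx'x); lia.
Qed.

Lemma S_set_add_total x : x \notin P_set e -> total_mv_set e (x |: S_set e).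
Proof.
move=> HxP a b; have [q [Hq Hx]] := shortest_path_avoiding a b HxP.
exists q; split => // v Hv; rewrite !inE negb_or.
rewrite (internal_not_simplicial Hq Hv) andbT.
by apply: contraNneq Hx => <-.
Qed.

Lemma S_set_max_eq_nonP :
  (forall X, total_mv_set e X -> #|X| <= #|S_set e|) -> S_set e = ~: P_set e.
Proof.
move=> Hmax; apply/eqP; rewrite eqEsubset total_subset_nonP /=; last exact: S_set_total.
apply/subsetP => v; rewrite inE => HvP; apply/negPn/negP => HvS.
by have := Hmax _ (S_set_add_total v HvP); rewrite cardsU1 HvS /=; lia.
Qed.

(* Part (iii): if the complement of P attains mu_t, then it is the unique
   mu_t-set, hence equal to the set of vertices lying in all mu_t-sets. *)
Lemma C_set_of_nonP_mu_t :
  is_mu_t e #|~: P_set e| -> C_set e = ~: P_set e.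
Proof.
move=> [[X0 [HX0 HX0c]] Hmax].
have unique X : total_mv_set e X -> #|~: P_set e| <= #|X| -> X = ~: P_set e.
  by move=> HX Hc; apply/eqP; rewrite eqEcard total_subset_nonP.
have mu_t_X0 : mu_t_set e X0 by split => // Y HY; rewrite HX0c Hmax.
apply/setP => v; rewrite inE; apply/asboolP/idP => [HC|Hv X [HX HXmax]].
- by rewrite -(unique X0 HX0) ?HX0c //; apply: HC.
- by rewrite (unique X HX) // -HX0c HXmax.
Qed.

End Visibility.

Arguments C_set_of_nonP_mu_t {T e}.

Theorem proposition3p3 (T : finType) (e : rel T) (m : nat) :
  simple_graph e -> connected_graph e -> is_mu_t e m ->
  [/\ #|S_set e| <= m,
      m = #|S_set e| -> m = #|T| - #|P_set e|
    & m = #|T| - #|P_set e| -> m = #|C_set e| ].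
Proof.
move=> [sym _] conn mu_t_m.
have [_ Hmax] := mu_t_m.
have card_nonP : #|~: P_set e| = #|T| - #|P_set e| by rewrite cardsCs setCK.
split.
- by apply: Hmax; apply: S_set_total.
- move=> Hm; have S_nonP : S_set e = ~: P_set e.
    by apply: S_set_max_eq_nonP => // X HX; rewrite -Hm Hmax.
  by rewrite -card_nonP -S_nonP.
- by move=> Hm; rewrite (C_set_of_nonP_mu_t sym) card_nonP -Hm.
Qed.
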